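(* Let $r\ge1$ and $k\ge1$ be integers. If $\vec a,\vec b\in\mathcal H_{r,k}$ have disjoint support, i.e. $a_i\ne b_j$ for all $i,j$, then transforming $\vec a$ into $\vec b$ in the Hanoi game on $\mathcal H_{r,k}$ requires exactly $2^k-1$ moves. The same holds for $\vec a,\vec b\in\mathcal H^*_{r,k}$ with disjoint support in the Hanoi game on $\mathcal H^*_{r,k}$.
   Context: A Hanoi state is a finite sequence of nonnegative integers $\vec x=(x_1,\dots,x_k)$ with $x_i\ne x_{i-1}$ for all $i>1$. $\mathcal H_{r,k}$ is the set of Hanoi states in $\{0,1,\dots,r\}^k$, and $\mathcal H^*_{r,k}\subseteq\mathcal H_{r,k}$ is the set of proper Hanoi states, those with $x_1\ne0$. In the Hanoi game on $\mathcal H_{r,k}$ a state is transformed by moves of two types: (1) an adjustment changes $x_k$ to any other value in $\{0,1,\dots,r\}$ different from $x_{k-1}$ (if $k=1$, to any other value); (2) for $k\ge2$, an involution finds the longest final segment $(x_j,\dots,x_k)$ of $\vec x$ on which the entries alternate between the values $x_k$ and $x_{k-1}$, and swaps the values $x_k$ and $x_{k-1}$ throughout that segment (e.g. $(1,2,3,4)\mapsto(1,2,4,3)$, $(1,2,1,2)\mapsto(2,1,2,1)$). The Hanoi game on $\mathcal H^*_{r,k}$ is the same but all states involved must be proper (moves that would make $x_1=0$ are forbidden). The number of moves required is the minimum length of a sequence of moves transforming $\vec a$ into $\vec b$. *)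

From mathcomp Require Import all_boot.
Set Implicit Arguments. Unset Strict Implicit. Unset Printing Implicit Defensive.

(* A Hanoi state (x_1,...,x_k) is a seq nat read left to right: x_1 is the
   head, x_k is the last entry. *)

Definition adj_distinct (x : seq nat) : bool :=
  sorted (fun a b => a != b) x.

Definition hanoi (r k : nat) (x : seq nat) : Prop :=
  size x = k /\ all (fun v => v <= r) x /\ adj_distinct x.

Definition hanoi_proper (r k : nat) (x : seq nat) : Prop :=
  hanoi r k x /\ head 0 x != 0.

Definition adjustment (r : nat) (x z : seq nat) : Prop :=
  exists (y : seq nat) (c d : nat),
    [/\ x = rcons y c, z = rcons y d, d <= r, d != c &
        (if y is [::] then true else d != last 0 y)].

Fixpoint swap_alt (a b : nat) (l : seq nat) : seq nat :=
  match l with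
  | [::] => [::]
  | c :: l' => if c == a then b :: swap_alt b a l' else l
  end.

(* Involution (used only when k >= 2): with u = x_k, w = x_{k-1}, swap u
   and w on the longest final segment alternating between u and w. *)
Definition involution (x : seq nat) : seq nat :=
  let rx := rev x in
  let u := nth 0 rx 0 in
  let w := nth 0 rx 1 in
  rev (swap_alt u w rx).

Definition hanoi_move (r : nat) (S : seq nat -> Prop) (x z : seq nat) : Prop :=
  S x /\ S z /\ (adjustment r x z \/ (2 <= size x /\ z = involution x)).

Fixpoint reach_in (R : seq nat -> seq nat -> Prop) (n : nat)
    (a b : seq nat) : Prop :=
  match n with
  | 0 => a = b
  | n'.+1 => exists c, R a c /\ reach_in R n' c b
  end.

Definition moves_required (R : seq nat -> seq nat -> Prop)
    (a b : seq nat) (m : nat) : Prop :=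
  reach_in R m a b /\ (forall n, reach_in R n a b -> m <= n).

Definition disjoint_support (a b : seq nat) : Prop :=
  forall i j, i < size a -> j < size b -> nth 0 a i <> nth 0 b j.

(* A move changes the first entry of a state only if the state alternates
   x1, w, x1, w, ..., and the move then swaps x1 and w throughout; every other
   move on x1 :: x is a move on x in the game where x1 is forbidden as first
   entry.  So, as for the classical Tower of Hanoi, a walk between states with
   disjoint support must bring the tail to an alternating state, swap, and
   move the tail again, which costs 2 (2^(k-1) - 1) + 1 moves, and this many
   moves also suffice.  For the lower bound, disjointness is weakened to allow
   the forbidden value as a common entry, and the bound is proved together
   with the bound 2^(k-1) for any walk that brings a new value to the front. *)

From mathcomp Require Import all_boot zify.

Set Implicit Arguments.
Unset Strict Implicit.
Unset Printing Implicit Defensive.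

Section Walks.

Variable R : seq nat -> seq nat -> Prop.

Lemma reach_in_cat m n x y z :
  reach_in R m x y -> reach_in R n y z -> reach_in R (m + n) x z.
Proof.
elim: m x => [|m IHm] x /=; first by move->.
by move=> [x' [xx' x'y]] yz; exists x'; split; last exact: IHm x'y yz.
Qed.

Lemma reach_in_sym :
  (forall x z, R x z -> R z x) -> forall n x y, reach_in R n x y -> reach_in R n y x.
Proof.
move=> R_sym; elim=> [|n IHn] x y; first by move->.
move=> [x' [xx' x'y]]; rewrite -addn1.
by apply: reach_in_cat (IHn _ _ x'y) _; exists x; split; first exact: R_sym.
Qed.

Variables (R' : seq nat -> seq nat -> Prop) (P : seq nat -> Prop).
Hypotheses (eq_R : forall x z, P x -> R x z <-> R' x z)
           (R_P : forall x z, R x z -> P z).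

Lemma eq_reach_in n x y : P x -> reach_in R n x y <-> reach_in R' n x y.
Proof.
elim: n x => [|n IHn] x Px //=.
split=> -[z [xz zy]]; exists z.
  by split; [exact/eq_R | exact/(IHn _ (R_P xz))].
have xz' : R x z by exact/eq_R.
by split; last exact/(IHn _ (R_P xz')).
Qed.

Lemma eq_moves_required x y m :
  P x -> moves_required R x y m <-> moves_required R' x y m.
Proof.
move=> Px; have E n := eq_reach_in n y Px.
split=> -[xy min_m]; split=> [|n xy_n]; rewrite ?E // in xy *.
- by apply: min_m; rewrite E.
- by apply: min_m; rewrite -E.
Qed.

End Walks.

Fixpoint alt_seq (u w n : nat) : seq nat :=
  if n is n'.+1 then u :: alt_seq w u n' else [::].

Lemma size_alt_seq u w n : size (alt_seq u w n) = n.
Proof. by elim: n u w => //= n IHn u w; rewrite IHn. Qed.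

Lemma mem_alt_seq v u w n : v \in alt_seq u w n -> (v == u) || (v == w).
Proof.
by elim: n u w => //= n IHn u w; rewrite inE => /orP[-> // | /IHn]; rewrite orbC.
Qed.

Lemma alt_seqS u w n :
  alt_seq u w n.+1 = rcons (alt_seq u w n) (if odd n then w else u).
Proof. by elim: n u w => //= n IHn u w; rewrite IHn; case: (odd n). Qed.

Lemma rev_alt_seq u w n :
  rev (alt_seq u w n) = if odd n then alt_seq u w n else alt_seq w u n.
Proof.
elim: n u w => //= n IHn u w; rewrite rev_cons IHn.
by case: ifP => odd_n /=; rewrite -[_ :: _]/(alt_seq _ _ n.+1) alt_seqS odd_n.
Qed.

Lemma swap_alt_alt_seq a b n : swap_alt a b (alt_seq a b n) = alt_seq b a n.
Proof. by elim: n a b => //= n IHn a b; rewrite eqxx IHn. Qed.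

Lemma size_swap_alt a b l : size (swap_alt a b l) = size l.
Proof. by elim: l a b => //= c l IHl a b; case: ifP => //= _; rewrite IHl. Qed.

Lemma swap_alt_rcons a b l c :
  swap_alt a b (rcons l c) =
  if rcons l c == alt_seq a b (size l).+1 then alt_seq b a (size l).+1
  else rcons (swap_alt a b l) c.
Proof.
elim: l a b => [|d l IHl] a b /=; first by rewrite eqseq_cons andbT; case: eqP.
by rewrite eqseq_cons; case: eqP => //= _; rewrite IHl; case: ifP.
Qed.

Lemma swap_altK a b l :
  path (fun x y => x != y) b l -> swap_alt b a (swap_alt a b l) = l.
Proof.
elim: l a b => //= c l IHl a b /andP[bc cl].
case: eqP => [ca | _] /=; last by rewrite eq_sym (negbTE bc).
by rewrite eqxx IHl -ca.
Qed.

Lemma size_involution x : size (involution x) = size x.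
Proof. by rewrite /involution size_rev size_swap_alt size_rev. Qed.

Lemma involution_alt_seq u w n :
  1 < n -> involution (alt_seq u w n) = alt_seq w u n.
Proof.
move=> n_gt1; rewrite /involution rev_alt_seq.
case: n n_gt1 => [|[|n]] // _; case: ifP => odd_n;
  by rewrite [nth _ _ 0]/= [nth _ _ 1]/= swap_alt_alt_seq rev_alt_seq odd_n.
Qed.

Lemma involution_cons x1 x : 1 < size x ->
  involution (x1 :: x) = x1 :: involution x \/
  exists w, x1 :: x = alt_seq x1 w (size x).+1 /\
            involution (x1 :: x) = alt_seq w x1 (size x).+1.
Proof.
move=> x_gt1; rewrite /involution rev_cons.
have nth_rcons_rev i : i < 2 -> nth 0 (rcons (rev x) x1) i = nth 0 (rev x) i.
  by move=> i_lt2; rewrite nth_rcons size_rev (leq_trans i_lt2 x_gt1).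
rewrite !nth_rcons_rev // swap_alt_rcons size_rev.
case: eqP => [/(congr1 rev) | _]; last by left; rewrite rev_rcons.
rewrite rev_rcons revK !rev_alt_seq /= => x_alt; right.
case: ifP x_alt => _ [x1_eq x_eq]; rewrite -x1_eq in x_eq *.
all: by eexists; split; last reflexivity; rewrite {1}x_eq.
Qed.

Lemma adj_distinct_rev x : adj_distinct (rev x) = adj_distinct x.
Proof. by rewrite /adj_distinct rev_sorted; apply: eq_sorted => a b; rewrite eq_sym. Qed.

Lemma involutionK x : adj_distinct x -> 1 < size x -> involution (involution x) = x.
Proof.
rewrite -adj_distinct_rev -size_rev {2}/involution.
case x_rev: (rev x) => [|u [|w t]] // /andP[uw wt] _.
have swap_uw : swap_alt u w [:: u, w & t] = [:: w, u & swap_alt u w t].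
  by rewrite /= !eqxx.
rewrite [nth _ _ 0]/= [nth _ _ 1]/= swap_uw /involution revK [nth _ _ 0]/= [nth _ _ 1]/=.
rewrite -swap_uw swap_altK; first by rewrite -x_rev revK.
by rewrite /= eq_sym uw.
Qed.

(* f = r.+1 gives H_{r,k}, f = 0 gives H*_{r,k}, and the tail of a state
   x1 :: x is a state after x1. *)
Definition hanoi_after (r f : nat) (x : seq nat) : bool :=
  all (fun v => v <= r) x && path (fun a b => a != b) f x.

Local Notation game r f := (hanoi_move r (fun x => hanoi_after r f x)).

Lemma hanoi_after_cons r f x1 x :
  hanoi_after r f (x1 :: x) = [&& x1 <= r, x1 != f & hanoi_after r x1 x].
Proof.
rewrite /hanoi_after /= eq_sym.
by case: (x1 <= r); case: (x1 != f); rewrite /= ?andbF.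
Qed.

Lemma hanoi_after_alt_seq r f u w n :
  u <= r -> w <= r -> u != w -> u != f -> hanoi_after r f (alt_seq u w n).
Proof.
elim: n u w f => [|n IHn] u w f ur wr uw uf; first by [].
by rewrite hanoi_after_cons ur uf IHn // eq_sym.
Qed.

Lemma size_hanoi_move r S x z : hanoi_move r S x z -> size z = size x.
Proof.
move=> [_ [_ [[y [c [d [-> -> _ _ _]]]] | [_ ->]]]].
  by rewrite !size_rcons.
by rewrite size_involution.
Qed.

Lemma adjustment_sym r x z :
  adjustment r x z -> all (fun v => v <= r) x -> adj_distinct x -> adjustment r z x.
Proof.
move=> [y [c [d [-> -> d_le dc d_last]]]].
rewrite all_rcons => /andP[c_le _] x_dist.
exists y, d, c; split; rewrite // 1?eq_sym //.
case: y x_dist {d_last} => //= y0 y.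
by rewrite /adj_distinct /= rcons_path eq_sym => /andP[].
Qed.

Lemma game_sym r f x z : game r f x z -> game r f z x.
Proof.
move=> [x_ok [z_ok xz]]; do 2!split=> //.
case: xz => [adj | [x_gt1 ->]].
  case/andP: x_ok => x_le /path_sorted x_dist.
  by left; apply: adjustment_sym adj x_le x_dist.
right; rewrite size_involution involutionK //.
by case/andP: x_ok => _ /path_sorted.
Qed.

Lemma game_swap r f u w n :
  u <= r -> w <= r -> u != w -> u != f -> w != f -> 0 < n ->
  game r f (alt_seq u w n) (alt_seq w u n).
Proof.
move=> ur wr uw uf wf n_gt0; split; first exact: hanoi_after_alt_seq.
split; first by apply: hanoi_after_alt_seq; rewrite // eq_sym.
case: n n_gt0 => [|[|n]] // _.
  by left; exists [::], u, w; split; rewrite // eq_sym.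
by right; rewrite size_alt_seq involution_alt_seq.
Qed.

Lemma adjustment_cons r x1 x z :
  adjustment r x z -> path (fun a b => a != b) x1 z -> adjustment r (x1 :: x) (x1 :: z).
Proof.
move=> [y [c [d [-> -> dr dc d_last]]]] x1z.
exists (x1 :: y), c, d; split=> //.
by case: y d_last x1z => //= _; rewrite andbT eq_sym.
Qed.

Lemma game_cons r f x1 x z :
  x1 <= r -> x1 != f -> game r x1 x z -> game r f (x1 :: x) (x1 :: z).
Proof.
move=> x1r x1f [x_ok [z_ok xz]].
split; first by rewrite hanoi_after_cons x1r x1f.
split; first by rewrite hanoi_after_cons x1r x1f.
case: xz => [adj | [x_gt1 z_eq]].
  by left; apply: adjustment_cons => //; case/andP: z_ok.
right; split; first exact: ltnW.
have [-> // | [w [x_alt _]]] := involution_cons x1 x_gt1; first by rewrite z_eq.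
have x_eq : x = alt_seq w x1 (size x) by case: x_alt.
move: z_ok; rewrite z_eq x_eq involution_alt_seq ?size_alt_seq //.
by case: (size x) x_gt1 => // n _; rewrite [alt_seq _ _ _]/= hanoi_after_cons eqxx andbF.
Qed.

Lemma game_consE r f x1 x z : game r f (x1 :: x) z ->
  (exists2 z', z = x1 :: z' & game r x1 x z') \/
  exists w, x1 :: x = alt_seq x1 w (size x).+1 /\ z = alt_seq w x1 (size x).+1.
Proof.
move=> [x_ok [z_ok [[y [c [d [x_eq z_eq dr dc d_last]]]] | [x_gt1 z_eq]]]]; subst z.
- case: y x_eq d_last z_ok => [|y0 y] [x1_eq x_eq] d_last z_ok; subst;
    first by right; exists d.
  move: x_ok z_ok; rewrite /= !hanoi_after_cons => /and3P[_ _ x_ok] /and3P[_ _ z_ok].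
  left; exists (rcons y d) => //; do 2!split=> //.
  by left; exists y, c, d; split=> //; case: y d_last {x_ok z_ok}.
- case: x x_gt1 x_ok z_ok => [|x2 [|x3 x]] // _.
    by move=> _ _; right; exists x2; rewrite /involution /= !eqxx.
  set x' := [:: x2, x3 & x]; have x'_gt1 : 1 < size x' by [].
  have [-> | alt] := involution_cons x1 x'_gt1; last by right.
  rewrite hanoi_after_cons => /and3P[_ _ x_ok].
  rewrite hanoi_after_cons => /and3P[_ _ z_ok].
  by left; exists (involution x') => //; do 2!split=> //; right.
Qed.

Lemma size_reach_in r S n x y : reach_in (hanoi_move r S) n x y -> size y = size x.
Proof.
elim: n x => [|n IHn] x /=; first by move->.
by move=> [z [/size_hanoi_move <- /IHn]].
Qed.

Lemma reach_in_cons r f x1 n x z : x1 <= r -> x1 != f ->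
  reach_in (game r x1) n x z -> reach_in (game r f) n (x1 :: x) (x1 :: z).
Proof.
move=> x1r x1f; elim: n x => [|n IHn] x /=; first by move->.
by move=> [x' [xx' x'z]]; exists (x1 :: x'); split; [exact: game_cons | exact: IHn].
Qed.

Lemma reach_in_swap r f u w n i j x z :
  u <= r -> w <= r -> u != w -> u != f -> w != f ->
  reach_in (game r u) i x (alt_seq w u n) -> reach_in (game r w) j (alt_seq u w n) z ->
  reach_in (game r f) (i + j).+1 (u :: x) (w :: z).
Proof.
move=> ur wr uw uf wf xi zj; rewrite -addnS.
apply: reach_in_cat (reach_in_cons ur uf xi) _.
exists (alt_seq w u n.+1); split; first exact: (game_swap (n := n.+1)) ur wr uw uf wf _.
exact: reach_in_cons wr wf zj.
Qed.

Lemma reach_in_head_change r f L x1 x y :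
  reach_in (game r f) L (x1 :: x) y -> head x1 y != x1 ->
  exists i j w, [/\ L = (i + j).+1,
    reach_in (game r x1) i x (alt_seq w x1 (size x)),
    game r f (alt_seq x1 w (size x).+1) (alt_seq w x1 (size x).+1) &
    reach_in (game r f) j (alt_seq w x1 (size x).+1) y].
Proof.
elim: L x => [|L IHL] x; first by move=> /= <-; rewrite eqxx.
move=> [z [xz zy]] y_head.
have [[z' z_eq x1z'] | [w [x_alt z_alt]]] := game_consE xz.
  rewrite z_eq in zy xz.
  have [i [j [w [-> z'i M yj]]]] := IHL z' zy y_head.
  exists i.+1, j, w; rewrite -(size_hanoi_move x1z'); split=> //.
  by exists z'.
exists 0, L, w; split=> //; first by case: x_alt.
  by rewrite -x_alt -z_alt.
by rewrite -z_alt.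
Qed.

Lemma pow2S_sub1 n : 2 ^ n.+1 - 1 = (2 ^ n - 1 + (2 ^ n - 1)).+1.
Proof. by rewrite expnS; have := expn_gt0 2 n; lia. Qed.

Lemma notin_alt_seq v u w n : v != u -> v != w -> v \notin alt_seq u w n.
Proof. by move=> vu vw; apply/negP => /mem_alt_seq; rewrite (negbTE vu) (negbTE vw). Qed.

Lemma reach_in_alt_seq r n f w x :
  size x = n -> f <= r -> w <= r -> w != f -> hanoi_after r f x -> w \notin x ->
  reach_in (game r f) (2 ^ n - 1) x (alt_seq w f n).
Proof.
elim: n f w x => [|n IHn] f w [|x1 x] //= [sx] fr wr wf.
rewrite hanoi_after_cons inE negb_or => /and3P[x1r x1f x_ok] /andP[wx1 wx].
have x1w : x1 != w by rewrite eq_sym.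
rewrite pow2S_sub1; apply: (reach_in_swap (n := n)) => //; first exact: IHn.
apply: IHn; rewrite ?size_alt_seq 1?eq_sym //; first exact: hanoi_after_alt_seq.
by apply: notin_alt_seq; rewrite // eq_sym.
Qed.

Lemma reach_in_disjoint r f x y :
  size x = size y -> hanoi_after r f x -> hanoi_after r f y -> ~~ has (mem y) x ->
  reach_in (game r f) (2 ^ size x - 1) x y.
Proof.
case: x y => [|x1 x] [|y1 y] //= [sxy].
rewrite !hanoi_after_cons => /and3P[x1r x1f x_ok] /and3P[y1r y1f y_ok].
rewrite !inE negb_or => /andP[/norP[x1y1 x1y] /hasPn yx].
have y1x : y1 \notin x := contraL (yx y1) (mem_head y1 y).
rewrite pow2S_sub1; apply: (reach_in_swap (n := size x)) => //.
  by apply: reach_in_alt_seq; rewrite // eq_sym.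
apply: (reach_in_sym (@game_sym r y1)); rewrite sxy.
by apply: reach_in_alt_seq; rewrite // eq_sym.
Qed.

(* The exception is needed for the tail x of x1 :: x, whose target
   alt_seq w x1 may share the value x1 with it. *)
Definition disjoint_except (f : nat) (x y : seq nat) : bool :=
  all (fun v => (v \in y) ==> (v == f)) x.

Lemma disjoint_except_alt_seq f w x n :
  w \notin x -> disjoint_except f x (alt_seq w f n).
Proof.
move=> wx; apply/allP => v vx; apply/implyP => /mem_alt_seq /orP[/eqP vw | //].
by rewrite -vw vx in wx.
Qed.

Section NewHead.

Variables r n : nat.

Hypothesis disjoint_except_lb : forall f L x y,
  size x = n -> hanoi_after r f x -> hanoi_after r f y -> disjoint_except f x y ->
  reach_in (game r f) L x y -> 2 ^ n - 1 <= L.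

Lemma new_head_lb f L x v y :
  size x = n.+1 -> hanoi_after r f x -> v \notin x ->
  reach_in (game r f) L x (v :: y) -> 2 ^ n <= L.
Proof.
elim/ltn_ind: L x => L IHL [//|x1 x] [sx] x_ok vx walk.
move: vx; rewrite inE negb_or => /andP[vx1 vx].
have [i [j [w [L_eq xi [M_src [M_dst _]] wj]]]] := reach_in_head_change walk vx1.
rewrite sx in xi M_src M_dst wj; rewrite L_eq.
move: x_ok M_src; rewrite hanoi_after_cons => /and3P[_ _ x_ok].
rewrite [alt_seq x1 _ _]/= hanoi_after_cons => /and3P[_ _ alt_ok].
have [wv | wv] := eqVneq w v.
  rewrite wv in xi alt_ok.
  have := disjoint_except_lb sx x_ok alt_ok (disjoint_except_alt_seq _ _ vx) xi.
  by have := expn_gt0 2 n; lia.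
have v_alt : v \notin alt_seq w x1 n.+1 by apply: notin_alt_seq; rewrite // eq_sym.
have j_lt : j < L by rewrite L_eq ltnS leq_addl.
by have := IHL j j_lt _ (size_alt_seq _ _ _) M_dst v_alt wj; lia.
Qed.

End NewHead.

Lemma disjoint_except_lb r n f L x y :
  size x = n -> hanoi_after r f x -> hanoi_after r f y -> disjoint_except f x y ->
  reach_in (game r f) L x y -> 2 ^ n - 1 <= L.
Proof.
elim: n f L x y => [|n IHn] f L x y; first by rewrite expn0 subnn.
elim/ltn_ind: L x => L IHL [//|x1 x] [sx] x_ok y_ok dxy walk.
have sy : size y = n.+1 by rewrite (size_reach_in walk) /= sx.
move: x_ok dxy; rewrite hanoi_after_cons => /and3P[x1r x1f x_ok] /= /andP[x1yf dxy].
have x1y : x1 \notin y := contra (implyP x1yf) x1f.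
have y_head : head x1 y != x1.
  case: y sy x1y {y_ok IHL walk dxy x1yf} => //= y1 y _.
  by rewrite inE negb_or eq_sym => /andP[].
have [i [j [w [L_eq xi M wj]]]] := reach_in_head_change walk y_head.
rewrite sx in xi M wj; rewrite L_eq; have [M_src [M_dst _]] := M.
move: (M_src) (M_dst); rewrite [alt_seq x1 _ _]/= [alt_seq w _ _]/= !hanoi_after_cons.
move=> /and3P[_ _ alt_ok] /and3P[_ wf _].
case wy: (w \in y).
  have wx : w \notin x by apply/negP => /(allP dxy); rewrite wy (negbTE wf).
  have := IHn _ _ _ _ sx x_ok alt_ok (disjoint_except_alt_seq _ _ wx) xi.
  have back : reach_in (game r f) j.+1 y (x1 :: alt_seq w x1 n).
    by apply: (reach_in_sym (@game_sym r f)); exists (alt_seq w x1 n.+1).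
  have := new_head_lb IHn sy y_ok x1y back.
  by rewrite expnS; lia.
have j_lt : j < L by rewrite L_eq ltnS leq_addl.
suff : 2 ^ n.+1 - 1 <= j by lia.
apply: IHL j_lt _ (size_alt_seq _ _ _) M_dst y_ok _ wj.
by apply/allP => v /mem_alt_seq /orP[] /eqP ->; rewrite ?wy ?(negbTE x1y).
Qed.

Theorem moves_required_disjoint r f x y :
  size x = size y -> hanoi_after r f x -> hanoi_after r f y -> ~~ has (mem y) x ->
  moves_required (game r f) x y (2 ^ size x - 1).
Proof.
move=> sxy x_ok y_ok dxy; split; first exact: reach_in_disjoint.
move=> L; apply: disjoint_except_lb => //.
by apply/allP => v vx; apply/implyP => vy; case/negP: (hasPn dxy v vx).
Qed.

Lemma hanoiE r k x : hanoi r k x <-> size x = k /\ hanoi_after r r.+1 x.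
Proof.
rewrite /hanoi /hanoi_after; split=> [[sx [x_le x_dist]] | [sx /andP[x_le x_path]]].
  split=> //; rewrite x_le; case: x x_le x_dist {sx} => //= x1 x /andP[x1r _] ->.
  by rewrite neq_ltn ltnS x1r orbT.
by do 2!split=> //; apply: path_sorted x_path.
Qed.

Lemma hanoi_properE r k : 0 < k ->
  forall x, hanoi_proper r k x <-> size x = k /\ hanoi_after r 0 x.
Proof.
move=> k_gt0 x; rewrite /hanoi_proper hanoiE.
case: x => [|x1 x] /=; first by split=> [[_ //] | [k0]]; rewrite -k0 in k_gt0.
rewrite !hanoi_after_cons; case: (boolP (x1 <= r)) => x1r /=; last by split=> -[].
have -> : x1 != r.+1 by rewrite neq_ltn ltnS x1r.
by split=> [[[sx x_ok] x10] | [sx /andP[x10 x_ok]]]; rewrite sx x10 x_ok.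
Qed.

Lemma disjoint_support_has a b : disjoint_support a b -> ~~ has (mem b) a.
Proof.
move=> dab; apply/hasPn => v va; apply/negP => vb.
by apply: (dab (index v a) (index v b)); rewrite ?index_mem ?nth_index.
Qed.

Lemma hanoi_moves_required r k f (S : seq nat -> Prop) a b :
  (forall x, S x <-> size x = k /\ hanoi_after r f x) ->
  S a -> S b -> disjoint_support a b ->
  moves_required (hanoi_move r S) a b (2 ^ k - 1).
Proof.
move=> SE /SE[sa a_ok] /SE[sb b_ok] /disjoint_support_has dab.
rewrite (eq_moves_required (R' := game r f) (P := fun x => size x = k)) //.
- by rewrite -sa; apply: moves_required_disjoint; rewrite ?sa ?sb.
- move=> x z sx; split=> [[/SE[_ x_ok] [/SE[_ z_ok] xz]] | xz]; first by [].
  have sz := size_hanoi_move xz; case: xz => x_ok [z_ok xz].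
  by split; [apply/SE; rewrite sx | split; [apply/SE; rewrite sz sx | ]].
- by move=> x z [_ [/SE[]]].
Qed.

Theorem lemma6 (r k : nat) :
  1 <= r -> 1 <= k ->
  (forall a b : seq nat,
      hanoi r k a -> hanoi r k b -> disjoint_support a b ->
      moves_required (hanoi_move r (hanoi r k)) a b (2 ^ k - 1)) /\
  (forall a b : seq nat,
      hanoi_proper r k a -> hanoi_proper r k b -> disjoint_support a b ->
      moves_required (hanoi_move r (hanoi_proper r k)) a b (2 ^ k - 1)).
Proof.
move=> _ k_gt0; split=> a b.
  exact: hanoi_moves_required (hanoiE r k).
exact: hanoi_moves_required (hanoi_properE r k_gt0).
Qed.
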